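(* Let $\otimes$ and $\oplus$ be uninorms on $[0,1]$ and let $\neg$ be a strong negation function. Then $(\otimes,\oplus)$ satisfies the rearrangement inequality if and only if $(\Phi^{\neg}(\oplus),\Phi^{\neg}(\otimes))$ satisfies the dual rearrangement inequality.
   Context: A uninorm is a function $\otimes:[0,1]^2\to[0,1]$ that is commutative, associative, monotonic (for all $x,y,z\in[0,1]$, $x\leq y$ implies $x\otimes z\leq y\otimes z$), and has an identity element $e\in[0,1]$ ($x\otimes e=x$ for all $x$). A negation is a monotonically nonincreasing function $\neg:[0,1]\to[0,1]$ with $\neg(0)=1$, $\neg(1)=0$; it is strong if it is strictly monotone and involutive ($\neg\neg x=x$ for all $x$). For a function $f:[0,1]^2\to[0,1]$, its dual is $\Phi^{\neg}(f)(x,y)=\neg(f(\neg x,\neg y))$. For uninorms $\otimes,\oplus$, the pair $(\otimes,\oplus)$ satisfies the rearrangement inequality if for every $n\geq1$, all $0\leq x_1\leq\cdots\leq x_n\leq 1$, $0\leq y_1\leq\cdots\leq y_n\leq 1$ and every permutation $\sigma$ of $\{1,\dots,n\}$, $$(x_n\otimes y_1)\oplus\cdots\oplus(x_1\otimes y_n)\leq (x_{\sigma(1)}\otimes y_1)\oplus\cdots\oplus(x_{\sigma(n)}\otimes y_n)\leq (x_1\otimes y_1)\oplus\cdots\oplus(x_n\otimes y_n),$$ and satisfies the dual rearrangement inequality if for all such data $$(x_n\oplus y_1)\otimes\cdots\otimes(x_1\oplus y_n)\geq (x_{\sigma(1)}\oplus y_1)\otimes\cdots\otimes(x_{\sigma(n)}\oplus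 y_n)\geq (x_1\oplus y_1)\otimes\cdots\otimes(x_n\oplus y_n).$$ (For a pair $(\otimes,\oplus)$ the first component plays the role of $\otimes$ and the second the role of $\oplus$ in these definitions.) *)

(* concrete reals R. Binary operations on [0,1] are modelled as
   functions R -> R -> R; all axioms are only required on [0,1]. *)
From Stdlib Require Import Reals Lra Lia.
Open Scope R_scope.

Definition in01 (x : R) : Prop := 0 <= x <= 1.

Definition is_uninorm (U : R -> R -> R) : Prop :=
  (forall x y, in01 x -> in01 y -> in01 (U x y)) /\
  (forall x y, in01 x -> in01 y -> U x y = U y x) /\
  (forall x y z, in01 x -> in01 y -> in01 z -> U x (U y z) = U (U x y) z) /\
  (forall x y z, in01 x -> in01 y -> in01 z -> x <= y -> U x z <= U y z) /\
  (exists e, in01 e /\ forall x, in01 x -> U x e = x).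

Definition is_negation (N : R -> R) : Prop :=
  (forall x, in01 x -> in01 (N x)) /\
  (forall x y, in01 x -> in01 y -> x <= y -> N y <= N x) /\
  N 0 = 1 /\ N 1 = 0.

Definition is_strong_negation (N : R -> R) : Prop :=
  is_negation N /\
  (forall x y, in01 x -> in01 y -> x < y -> N y < N x) /\
  (forall x, in01 x -> N (N x) = x).

Definition dual_op (N : R -> R) (f : R -> R -> R) : R -> R -> R :=
  fun x y => N (f (N x) (N y)).

(* n-fold aggregation  a_0 * a_1 * ... * a_(n-1)  (n >= 1), bracketed from the left
   (irrelevant by associativity). *)
Fixpoint fold_from (op : R -> R -> R) (a : nat -> R) (acc : R) (i k : nat) : R :=
  match k with
  | O => acc
  | S k' => fold_from op a (op acc (a i)) (S i) k'
  end.

Definition big_op (op : R -> R -> R) (n : nat) (a : nat -> R) : R :=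
  fold_from op a (a 0%nat) 1%nat (n - 1).

Definition sorted01 (n : nat) (x : nat -> R) : Prop :=
  (forall i, (i < n)%nat -> in01 (x i)) /\
  (forall i j, (i <= j < n)%nat -> x i <= x j).

Definition is_perm (n : nat) (s : nat -> nat) : Prop :=
  (forall i, (i < n)%nat -> (s i < n)%nat) /\
  (forall i j, (i < n)%nat -> (j < n)%nat -> s i = s j -> i = j).

Definition rearrangement_ineq (T S : R -> R -> R) : Prop :=
  forall (n : nat) (x y : nat -> R) (s : nat -> nat),
    (1 <= n)%nat -> sorted01 n x -> sorted01 n y -> is_perm n s ->
    big_op S n (fun i => T (x (n - 1 - i)%nat) (y i))
      <= big_op S n (fun i => T (x (s i)) (y i))
    /\ big_op S n (fun i => T (x (s i)) (y i))
      <= big_op S n (fun i => T (x i) (y i)).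

Definition dual_rearrangement_ineq (T S : R -> R -> R) : Prop :=
  forall (n : nat) (x y : nat -> R) (s : nat -> nat),
    (1 <= n)%nat -> sorted01 n x -> sorted01 n y -> is_perm n s ->
    big_op T n (fun i => S (x (n - 1 - i)%nat) (y i))
      >= big_op T n (fun i => S (x (s i)) (y i))
    /\ big_op T n (fun i => S (x (s i)) (y i))
      >= big_op T n (fun i => S (x i) (y i)).

(* The strong negation N reverses the order of [0,1], and i |-> n-1-i reverses
   the order of the indices.  Dualising the aggregate of x, y along an index map
   f yields N applied to the aggregate of the reflected sequences
   N (x (n-1-i)), N (y (n-1-i)) along the conjugated map n-1-f(n-1-i).
   Reflection preserves sortedness, conjugation preserves permutations and fixes
   the identity and the reversal, and N turns <= into >=.  As reflection and
   conjugation are involutions, the two families of inequalities correspond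
   instance by instance. *)
From Stdlib Require Import Reals Lra Lia.
Open Scope R_scope.

Fixpoint foldl_upto (op : R -> R -> R) (m : nat) (a : nat -> R) : R :=
  match m with O => a O | S k => op (foldl_upto op k a) (a m) end.

Lemma fold_from_foldl_upto op a k m :
  fold_from op a (foldl_upto op m a) (S m) k = foldl_upto op (m + k) a.
Proof.
  revert m; induction k as [|k IH]; intro m; simpl.
  - now rewrite Nat.add_0_r.
  - change (op (foldl_upto op m a) (a (S m))) with (foldl_upto op (S m) a).
    rewrite IH; f_equal; lia.
Qed.

Lemma big_op_foldl_upto op n a : big_op op n a = foldl_upto op (n - 1) a.
Proof. exact (fold_from_foldl_upto op a (n - 1) 0). Qed.

Lemma foldl_upto_ext op m a b :
  (forall i, (i <= m)%nat -> a i = b i) -> foldl_upto op m a = foldl_upto op m b.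
Proof.
  induction m as [|m IH]; intro Hab; simpl.
  - apply Hab; lia.
  - rewrite IH by (intros; apply Hab; lia).
    rewrite Hab by lia; reflexivity.
Qed.

Section FoldOnUnitInterval.

Variable op : R -> R -> R.
Hypothesis op_in01 : forall x y, in01 x -> in01 y -> in01 (op x y).
Hypothesis op_comm : forall x y, in01 x -> in01 y -> op x y = op y x.
Hypothesis op_assoc : forall x y z, in01 x -> in01 y -> in01 z ->
  op x (op y z) = op (op x y) z.

Lemma foldl_upto_in01 m a :
  (forall i, (i <= m)%nat -> in01 (a i)) -> in01 (foldl_upto op m a).
Proof.
  induction m as [|m IH]; intro Ha; simpl.
  - apply Ha; lia.
  - apply op_in01; [apply IH; intros | apply Ha]; auto with arith.
Qed.

Lemma foldl_upto_cons m a : (forall i, (i <= S m)%nat -> in01 (a i)) ->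
  foldl_upto op (S m) a = op (a O) (foldl_upto op m (fun i => a (S i))).
Proof.
  revert a; induction m as [|m IH]; intros a Ha; [reflexivity|].
  change (foldl_upto op (S (S m)) a) with (op (foldl_upto op (S m) a) (a (S (S m)))).
  rewrite IH by (intros; apply Ha; lia); simpl.
  symmetry; apply op_assoc; [apply Ha; lia | | apply Ha; lia].
  apply foldl_upto_in01; intros; apply Ha; lia.
Qed.

Lemma foldl_upto_rev m a : (forall i, (i <= m)%nat -> in01 (a i)) ->
  foldl_upto op m (fun i => a (m - i)%nat) = foldl_upto op m a.
Proof.
  revert a; induction m as [|m IH]; intros a Ha; [reflexivity|].
  rewrite foldl_upto_cons by (intros; apply Ha; lia).
  change (fun i => a (S m - S i)%nat) with (fun i => a (m - i)%nat).
  rewrite IH by (intros; apply Ha; lia); simpl.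
  apply op_comm; [apply Ha; lia | apply foldl_upto_in01; intros; apply Ha; lia].
Qed.

Lemma foldl_upto_dual_op N m a :
  (forall x, in01 x -> in01 (N x)) -> (forall x, in01 x -> N (N x) = x) ->
  (forall i, (i <= m)%nat -> in01 (a i)) ->
  foldl_upto (dual_op N op) m a = N (foldl_upto op m (fun i => N (a i))).
Proof.
  intros N_in01 N_invol.
  induction m as [|m IH]; intro Ha; simpl.
  - rewrite N_invol; auto with arith.
  - rewrite IH by (intros; apply Ha; lia); unfold dual_op.
    rewrite N_invol; [reflexivity|].
    apply foldl_upto_in01; intros; apply N_in01, Ha; lia.
Qed.

End FoldOnUnitInterval.

Lemma strong_negation_le_iff N a b : is_strong_negation N -> in01 a -> in01 b ->
  (N a <= N b <-> b <= a).
Proof.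
  intros [[_ [N_anti _]] [N_strict _]] Ha Hb; split; intro Hab.
  - destruct (Rle_lt_dec b a) as [|Hlt]; auto.
    specialize (N_strict a b Ha Hb Hlt); lra.
  - now apply N_anti.
Qed.

Definition reflect_seq (N : R -> R) (n : nat) (x : nat -> R) : nat -> R :=
  fun i => N (x (n - 1 - i)%nat).

Definition conj_perm (n : nat) (s : nat -> nat) : nat -> nat :=
  fun i => (n - 1 - s (n - 1 - i))%nat.

Lemma reflect_seq_involutive N n x : is_strong_negation N ->
  (forall i, (i < n)%nat -> in01 (x i)) ->
  forall i, (i < n)%nat -> x i = reflect_seq N n (reflect_seq N n x) i.
Proof.
  intros [_ [_ N_invol]] Hx i Hi; unfold reflect_seq.
  replace (n - 1 - (n - 1 - i))%nat with i by lia.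
  now rewrite N_invol by auto.
Qed.

Lemma conj_perm_involutive n s : (forall i, (i < n)%nat -> (s i < n)%nat) ->
  forall i, (i < n)%nat -> s i = conj_perm n (conj_perm n s) i.
Proof.
  intros Hs i Hi; unfold conj_perm.
  replace (n - 1 - (n - 1 - i))%nat with i by lia.
  specialize (Hs i Hi); lia.
Qed.

Lemma sorted01_reflect_seq N n x : is_strong_negation N ->
  sorted01 n x -> sorted01 n (reflect_seq N n x).
Proof.
  intros HN [Hx01 Hxle]; pose proof HN as [[N_in01 _] _]; split.
  - intros i Hi; apply N_in01, Hx01; lia.
  - intros i j Hij; apply strong_negation_le_iff; auto; try (apply Hx01; lia).
    apply Hxle; lia.
Qed.

Lemma is_perm_conj_perm n s : is_perm n s -> is_perm n (conj_perm n s).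
Proof.
  intros [Hs_lt Hs_inj]; unfold conj_perm; split; [intros; lia|].
  intros i j Hi Hj Hij.
  assert (s (n - 1 - i) < n)%nat by (apply Hs_lt; lia).
  assert (s (n - 1 - j) < n)%nat by (apply Hs_lt; lia).
  assert (n - 1 - i = n - 1 - j)%nat by (apply Hs_inj; lia).
  lia.
Qed.

Definition agg (T S : R -> R -> R) (n : nat) (x y : nat -> R) (f : nat -> nat) : R :=
  big_op S n (fun i => T (x (f i)) (y i)).

(* [0 < n] is needed: [big_op op 0 a] is [a 0], not a neutral element. *)
Lemma agg_in01 T S n x y f : is_uninorm T -> is_uninorm S -> (0 < n)%nat ->
  (forall i, (i < n)%nat -> in01 (x (f i))) -> (forall i, (i < n)%nat -> in01 (y i)) ->
  in01 (agg T S n x y f).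
Proof.
  intros [T_in01 _] [S_in01 _] Hn Hx Hy; unfold agg; rewrite big_op_foldl_upto.
  apply foldl_upto_in01; auto.
  intros i Hi; apply T_in01; [apply Hx | apply Hy]; lia.
Qed.

Lemma agg_dual_op T S N n x y f x' y' f' :
  is_uninorm T -> is_uninorm S -> is_strong_negation N -> (0 < n)%nat ->
  (forall i, (i < n)%nat -> in01 (x i)) -> (forall i, (i < n)%nat -> in01 (y i)) ->
  (forall i, (i < n)%nat -> (f i < n)%nat) ->
  (forall i, (i < n)%nat -> x' i = reflect_seq N n x i) ->
  (forall i, (i < n)%nat -> y' i = reflect_seq N n y i) ->
  (forall i, (i < n)%nat -> f' i = conj_perm n f i) ->
  agg (dual_op N T) (dual_op N S) n x y f = N (agg T S n x' y' f').
Proof.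
  intros [T_in01 _] [S_in01 [S_comm [S_assoc _]]] [[N_in01 _] [_ N_invol]] Hn
    Hx Hy Hf Hx' Hy' Hf'.
  unfold agg; rewrite !big_op_foldl_upto.
  rewrite foldl_upto_dual_op; auto.
  2:{ intros i Hi; apply N_in01, T_in01; apply N_in01; [apply Hx, Hf | apply Hy]; lia. }
  f_equal.
  rewrite <- foldl_upto_rev; auto.
  2:{ intros i Hi; apply N_in01, N_in01, T_in01; apply N_in01;
      [apply Hx, Hf | apply Hy]; lia. }
  apply foldl_upto_ext; intros i Hi.
  assert (f (n - 1 - i) < n)%nat by (apply Hf; lia).
  rewrite Hf', Hx', Hy' by (unfold conj_perm; lia); unfold dual_op, reflect_seq, conj_perm.
  replace (n - 1 - (n - 1 - f (n - 1 - i)))%nat with (f (n - 1 - i)%nat) by lia.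
  apply N_invol, T_in01; apply N_in01; [apply Hx | apply Hy]; lia.
Qed.

Definition rearrangement_at (T S : R -> R -> R) n x y (s : nat -> nat) : Prop :=
  agg T S n x y (fun i => n - 1 - i)%nat <= agg T S n x y s
  /\ agg T S n x y s <= agg T S n x y (fun i => i).

Definition dual_rearrangement_at (T S : R -> R -> R) n x y (s : nat -> nat) : Prop :=
  agg S T n x y (fun i => n - 1 - i)%nat >= agg S T n x y s
  /\ agg S T n x y s >= agg S T n x y (fun i => i).

Lemma dual_rearrangement_at_iff T S N n x y s x' y' s' :
  is_uninorm T -> is_uninorm S -> is_strong_negation N -> (0 < n)%nat ->
  (forall i, (i < n)%nat -> in01 (x i)) -> (forall i, (i < n)%nat -> in01 (y i)) ->
  (forall i, (i < n)%nat -> (s i < n)%nat) ->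
  (forall i, (i < n)%nat -> x' i = reflect_seq N n x i) ->
  (forall i, (i < n)%nat -> y' i = reflect_seq N n y i) ->
  (forall i, (i < n)%nat -> s' i = conj_perm n s i) ->
  dual_rearrangement_at (dual_op N S) (dual_op N T) n x y s
  <-> rearrangement_at T S n x' y' s'.
Proof.
  intros HT HS HN Hn Hx Hy Hs Hx' Hy' Hs'.
  pose proof HN as [[N_in01 _] _].
  assert (Hx'01 : forall i, (i < n)%nat -> in01 (x' i)).
  { intros i Hi; rewrite Hx' by lia; apply N_in01, Hx; lia. }
  assert (Hy'01 : forall i, (i < n)%nat -> in01 (y' i)).
  { intros i Hi; rewrite Hy' by lia; apply N_in01, Hy; lia. }
  assert (Hagg01 : forall f, (forall i, (i < n)%nat -> (f i < n)%nat) ->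
            in01 (agg T S n x' y' f)).
  { intros f Hf; apply agg_in01; auto. }
  unfold dual_rearrangement_at, rearrangement_at.
  rewrite (agg_dual_op T S N n x y (fun i => n - 1 - i)%nat x' y' (fun i => n - 1 - i)%nat),
    (agg_dual_op T S N n x y s x' y' s'),
    (agg_dual_op T S N n x y (fun i => i) x' y' (fun i => i));
    auto; try (intros; unfold conj_perm; lia).
  assert (Hs'_lt : forall i, (i < n)%nat -> (s' i < n)%nat).
  { intros i Hi; rewrite Hs' by lia; unfold conj_perm; lia. }
  assert (Hrev01 := Hagg01 (fun i => n - 1 - i)%nat ltac:(intros; cbv beta; lia)).
  assert (Hs'01 := Hagg01 s' Hs'_lt).
  assert (Hid01 := Hagg01 (fun i => i) ltac:(auto)).
  split; intros [H1 H2]; split.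
  - apply (strong_negation_le_iff N); auto; lra.
  - apply (strong_negation_le_iff N); auto; lra.
  - apply Rle_ge, (strong_negation_le_iff N); auto.
  - apply Rle_ge, (strong_negation_le_iff N); auto.
Qed.

Theorem theorem3 (T S : R -> R -> R) (N : R -> R) :
  is_uninorm T -> is_uninorm S -> is_strong_negation N ->
  (rearrangement_ineq T S <->
   dual_rearrangement_ineq (dual_op N S) (dual_op N T)).
Proof.
  intros HT HS HN; split.
  - intros RI n x y s Hn Hx Hy Hs.
    apply (dual_rearrangement_at_iff T S N n x y s
             (reflect_seq N n x) (reflect_seq N n y) (conj_perm n s));
      try apply Hx; try apply Hy; try apply Hs; auto.
    apply RI; auto using sorted01_reflect_seq, is_perm_conj_perm.
  - intros DRI n x y s Hn Hx Hy Hs.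
    pose proof (sorted01_reflect_seq N n x HN Hx) as Hx'.
    pose proof (sorted01_reflect_seq N n y HN Hy) as Hy'.
    pose proof (is_perm_conj_perm n s Hs) as Hs'.
    apply (dual_rearrangement_at_iff T S N n
             (reflect_seq N n x) (reflect_seq N n y) (conj_perm n s) x y s);
      try apply Hx'; try apply Hy'; try apply Hs'; auto.
    + now apply reflect_seq_involutive; [|apply Hx].
    + now apply reflect_seq_involutive; [|apply Hy].
    + now apply conj_perm_involutive, Hs.
    + now apply DRI.
Qed.
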